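(* Let $C$ be a linear code over $\mathbb{Z}_4$ of length $n$ and type $4^{k_1}2^{k_2}$, with generator matrix $G\in\mathbb{Z}_4^{(k_1+k_2)\times n}$. Suppose no column of $G$ lies in $(2\mathbb{Z}_4)^{k_1+k_2}$, and let $\mathbf{S}$ be a coset of $(2\mathbb{Z}_4)^{k_1+k_2}$ in $\mathbb{Z}_4^{k_1+k_2}$ other than $(2\mathbb{Z}_4)^{k_1+k_2}$ itself. Then $$\sum_{\mathbf{x}\in\mathbf{S}}w_L(\mathbf{x}G)=2^{k_1+k_2}n.$$
   Context: A linear code of length $n$ over $\mathbb{Z}_4$ is a $\mathbb{Z}_4$-submodule of $\mathbb{Z}_4^n$, of type $4^{k_1}2^{k_2}$ if isomorphic to $\mathbb{Z}_4^{k_1}\times\mathbb{Z}_2^{k_2}$. A generator matrix is a matrix whose rows generate the code and no proper subset of whose rows does. $2\mathbb{Z}_4=\{0,2\}$. Lee weight: $w_L(0)=0,w_L(1)=1,w_L(2)=2,w_L(3)=1$, additive on vectors. *)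

From HB Require Import structures.
From mathcomp Require Import all_boot all_order all_algebra.
Set Implicit Arguments. Unset Strict Implicit. Unset Printing Implicit Defensive.
Import GRing.Theory.
Local Open Scope ring_scope.

Definition leeZ4 (a : 'Z_4) : nat :=
  match nat_of_ord a with 0 => 0 | 1 => 1 | 2 => 2 | _ => 1 end%N.

Definition leeW n (x : 'rV['Z_4]_n) : nat := (\sum_(j < n) leeZ4 (x ord0 j))%N.

Definition in2Z4 (a : 'Z_4) : bool := (a == 0) || (a == 2).

Definition twoZ4vec m : {set 'rV['Z_4]_m} := [set x : 'rV['Z_4]_m | [forall i, in2Z4 (x ord0 i)]].

Definition linear_code n (C : {set 'rV['Z_4]_n}) : Prop :=
  0 \in C /\ (forall x y, x \in C -> y \in C -> x + y \in C)
  /\ (forall (a : 'Z_4) x, x \in C -> a *: x \in C).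

(* C is isomorphic (as a Z_4-module, i.e. as an abelian group) to
   Z_4^k1 x Z_2^k2. *)
Definition code_type n (C : {set 'rV['Z_4]_n}) (k1 k2 : nat) : Prop :=
  exists f : 'rV['Z_4]_k1 * 'rV['Z_2]_k2 -> 'rV['Z_4]_n,
    [/\ forall u v, f (u + v) = f u + f v,
        injective f &
        forall x, x \in C <-> exists u, x = f u].

Definition rows_span m n (G : 'M['Z_4]_(m, n)) (I : {set 'I_m}) : {set 'rV['Z_4]_n} :=
  [set u *m G | u in [set u : 'rV['Z_4]_m | [forall i, (i \notin I) ==> (u ord0 i == 0)]]].

Definition generator_matrix m n (G : 'M['Z_4]_(m, n)) (C : {set 'rV['Z_4]_n}) : Prop :=
  rows_span G setT = C /\
  (forall I : {set 'I_m}, I != setT -> rows_span G I != C).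

From mathcomp Require Import all_boot all_order all_algebra.
Local Open Scope ring_scope.
Import GRing.Theory.

(* Fix a column j of G and an odd entry G i j.  Translating x by 2 e_i inside
   the coset adds 2 to the j-th coordinate of x G, and w_L(a) + w_L(a + 2) = 2
   for every a in Z_4.  So the coset splits into pairs each contributing 2 to
   coordinate j, i.e. coordinate j contributes |S| = 2^(k1+k2) in total. *)

Lemma in2Z4D (a b : 'Z_4) : in2Z4 a -> in2Z4 b -> in2Z4 (a + b).
Proof. by case: a => [[|[|[|[|a]]]] ?] //; case: b => [[|[|[|[|b]]]] ?]. Qed.

Lemma in2Z4N (a : 'Z_4) : in2Z4 (- a) = in2Z4 a.
Proof. by case: a => [[|[|[|[|a]]]] ?]. Qed.

Lemma leeZ4_add2 (a : 'Z_4) : (leeZ4 a + leeZ4 (a + 2)%R)%N = 2%N.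
Proof. by case: a => [[|[|[|[|a]]]] ?]. Qed.

Lemma mul2_notin2Z4 (b : 'Z_4) : ~~ in2Z4 b -> 2 * b = 2.
Proof. by case: b => [[|[|[|[|b]]]] ?] // _; apply/val_inj. Qed.

Lemma twoZ4vecP m (x : 'rV['Z_4]_m) :
  reflect (forall i, in2Z4 (x ord0 i)) (x \in twoZ4vec m).
Proof. by rewrite inE; apply: forallP. Qed.

Lemma twoZ4vecD m (x y : 'rV['Z_4]_m) :
  x \in twoZ4vec m -> y \in twoZ4vec m -> x + y \in twoZ4vec m.
Proof.
by move=> /twoZ4vecP Hx /twoZ4vecP Hy; apply/twoZ4vecP => i; rewrite mxE in2Z4D.
Qed.

Lemma twoZ4vecN m (x : 'rV['Z_4]_m) : (- x \in twoZ4vec m) = (x \in twoZ4vec m).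
Proof.
by apply/twoZ4vecP/twoZ4vecP => Hx i; have := Hx i; rewrite mxE in2Z4N.
Qed.

Lemma twoZ4vec_addr m (d y : 'rV['Z_4]_m) :
  d \in twoZ4vec m -> (y + d \in twoZ4vec m) = (y \in twoZ4vec m).
Proof.
move=> Hd; apply/idP/idP => Hy; last exact: twoZ4vecD.
by rewrite -(addrK d y) twoZ4vecD ?twoZ4vecN.
Qed.

Lemma card_twoZ4vec m : #|twoZ4vec m| = (2 ^ m)%N.
Proof.
pose h (b : {ffun 'I_m -> bool}) : 'rV['Z_4]_m := \row_k (if b k then 2 else 0).
have h_inj : injective h.
  move=> b1 b2 /rowP E; apply/ffunP => k; have := E k; rewrite !mxE.
  by case: (b1 k); case: (b2 k).
have -> : twoZ4vec m = h @: setT.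
  apply/setP => x; apply/twoZ4vecP/imsetP => [Hx | [b _ ->] k].
  - exists [ffun k => x ord0 k == 2] => //; apply/rowP => k.
    by rewrite !mxE ffunE; case/orP: (Hx k) => /eqP ->.
  - by rewrite mxE; case: (b k).
by rewrite card_imset // cardsT card_ffun card_bool card_ord.
Qed.

Lemma sum_translation_pairs (V : finZmodType) (T : {set V}) (d : V)
    (F : V -> nat) (c : nat) :
  (forall y, (y + d \in T) = (y \in T)) ->
  (forall y, F y + F (y + d)%R = c)%N ->
  (2 * \sum_(y in T) F y = c * #|T|)%N.
Proof.
move=> Td HF.
have shift : (\sum_(y in T) F (y + d)%R = \sum_(y in T) F y)%N.
  rewrite [RHS](reindex_inj (addIr d)) /=.
  by apply: eq_bigl => y; rewrite Td.
rewrite mulSn mul1n -{2}shift -big_split /= mulnC -sum_nat_const.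
by apply: eq_bigr => y _; rewrite HF.
Qed.

Lemma sum_leeZ4_column m n (G : 'M['Z_4]_(m, n)) (v : 'rV['Z_4]_m) (i : 'I_m)
    (j : 'I_n) :
  ~~ in2Z4 (G i j) ->
  (\sum_(x in twoZ4vec m) leeZ4 (((v + x)%R *m G) ord0 j))%N = (2 ^ m)%N.
Proof.
move=> Gij_odd; pose d : 'rV['Z_4]_m := 2 *: delta_mx 0 i.
have d_in : d \in twoZ4vec m.
  by apply/twoZ4vecP => k; rewrite !mxE; case: (k == i); rewrite ?mulr1 ?mulr0.
have dG : (d *m G) ord0 j = 2.
  by rewrite -scalemxAl -rowE !mxE mul2_notin2Z4.
apply/eqP; rewrite -card_twoZ4vec -(eqn_pmul2l (isT : 0 < 2)%N).
rewrite (@sum_translation_pairs _ _ d _ 2) // => [y|y].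
  exact: twoZ4vec_addr.
have -> : ((v + (y + d)) *m G) ord0 j = ((v + y) *m G) ord0 j + 2.
  by rewrite addrA [(v + y + d) *m G]mulmxDl mxE dG.
exact: leeZ4_add2.
Qed.

Theorem corollary3p7 (n k1 k2 : nat) (C : {set 'rV['Z_4]_n})
    (G : 'M['Z_4]_(k1 + k2, n)) (S : {set 'rV['Z_4]_(k1 + k2)}) :
  linear_code C ->
  code_type C k1 k2 ->
  generator_matrix G C ->
  (forall j : 'I_n, exists i : 'I_(k1 + k2), ~~ in2Z4 (G i j)) ->
  (exists v : 'rV['Z_4]_(k1 + k2), S = [set v + x | x in twoZ4vec (k1 + k2)]) ->
  S != twoZ4vec (k1 + k2) ->
  (\sum_(x in S) leeW (x *m G))%N = (2 ^ (k1 + k2) * n)%N.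
Proof.
move=> _ _ _ col_odd [v ->] _.
rewrite big_imset /=; last by move=> x y _ _; apply: addrI.
rewrite exchange_big /= (eq_bigr (fun=> 2 ^ (k1 + k2))%N) => [|j _].
  by rewrite sum_nat_const card_ord mulnC.
have [i Gij_odd] := col_odd j.
exact: sum_leeZ4_column Gij_odd.
Qed.
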